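(* For every prime $p$ the natural maps induce an isomorphism of rings $$\mathbb Z[1/p][q]^{\mathbb N}\;\cong\;\prod_{j=0}^\infty\mathbb Z[1/p][q]^{p^j\mathbb N_p}.$$
   Context: $\mathbb N=\{1,2,\dots\}$, $\mathbb N_p=\{n\in\mathbb N:(n,p)=1\}$, $p^j\mathbb N_p=\{p^jn:n\in\mathbb N_p\}$. For a commutative integral domain $R$ of characteristic zero and $S\subset\mathbb N$, $R[q]^S=\varprojlim_{f\in\Phi^*_S}R[q]/(f)$, where $\Phi^*_S$ is the multiplicative set generated by the cyclotomic polynomials $\Phi_n(q)$, $n\in S$, directed by divisibility; for $S'\subset S$ there is a natural map $R[q]^S\to R[q]^{S'}$. *)

From HB Require Import structures.
From mathcomp Require Import all_boot all_order all_algebra all_field.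
Set Implicit Arguments. Unset Strict Implicit. Unset Printing Implicit Defensive.
Import Order.TTheory GRing.Theory Num.Theory.
Local Open Scope ring_scope.

(* Z[1/p] realised as the subring of Q of rationals whose denominator is a
   power of p. *)
Definition Zinvp (p : nat) : pred rat := fun x => p.-nat `|denq x|%N.

Definition ZinvpPoly (p : nat) (P : {poly rat}) : Prop :=
  forall i : nat, Zinvp p P`_i.

Definition Phi (n : nat) : {poly rat} := map_poly (intr : int -> rat) ('Phi_n).

(* Elements of the multiplicative set Phi*_S are the products
   \prod_{n <- s} Phi_n for finite sequences s of elements of S. *)
Definition Sseq (S : pred nat) (s : seq nat) : bool := all S s.
Definition PhiProd (s : seq nat) : {poly rat} := \prod_(n <- s) Phi n.

Definition Nat_pos : pred nat := fun n => (0 < n)%N.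
Definition pjNp (p j : nat) : pred nat :=
  fun n => [&& (0 < n)%N, (p ^ j %| n)%N & coprime (n %/ p ^ j)%N p].

(* An element of Z[1/p][q]^S = lim_{f in Phi*_S} Z[1/p][q]/(f).
   Each quotient Z[1/p][q]/(f) (f monic) is represented by its canonical
   representatives, the remainders mod f; a point of the inverse limit is a
   family x(s), s an S-sequence, with x(s) in Z[1/p][q] and
   x(s) = x(t) mod f_s whenever f_s | f_t (the transition maps).  Taking
   s = t forces x(s) to be reduced mod f_s. Only values at S-sequences matter. *)
Definition inLim (p : nat) (S : pred nat) (x : seq nat -> {poly rat}) : Prop :=
  (forall s, Sseq S s -> ZinvpPoly p (x s)) /\
  (forall s t, Sseq S s -> Sseq S t -> PhiProd s %| PhiProd t ->
     x s = x t %% PhiProd s).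

(* The index sets p^j N_p partition N according to the p-adic valuation, so
   the statement is a Chinese remainder theorem for the valuation layers of
   a finite set s of indices.  The arithmetic input is that Phi_m and Phi_n
   are comaximal in Z[1/p][q] when v_p(m) <> v_p(n): for v_p(m) < v_p(n) a
   power of p lies in the ideal (Phi_m, Phi_n) of Z[q], because Phi_n divides
   the geometric sum (Y^P - 1)/(Y - 1) = 1 + Y + ... + Y^(P-1), Y = q^K, which
   is congruent to P = p^(v_p(n) - v_p(m)) modulo Y - 1, a multiple of Phi_m. *)

From HB Require Import structures.
From mathcomp Require Import all_boot all_order all_algebra all_field.
From Stdlib Require Import ClassicalEpsilon.
Set Implicit Arguments. Unset Strict Implicit. Unset Printing Implicit Defensive.
Import GRing.Theory Num.Theory.
Local Open Scope ring_scope.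

Notation pZ := (map_poly (intr : int -> rat)).

Lemma modp_eqP (f a b : {poly rat}) : a %% f = b %% f <-> f %| a - b.
Proof.
split=> [e | dvd_f]; first by apply/modp_eq0P; rewrite modpD modpN e addrN.
by rewrite -[a](subrK b) modpD (modp_eq0 dvd_f) add0r.
Qed.

Lemma modp_dvd_modp (a d f : {poly rat}) : f %| d -> (a %% d) %% f = a %% f.
Proof.
move=> fd; apply/modp_eqP.
have -> : a %% d - a = - (a %/ d * d).
  by rewrite [X in _ - X](divp_eq a d) opprD addrA addrAC addrN add0r.
by rewrite dvdpNr dvdp_mull.
Qed.

Section CyclotomicCRT.

Variable p : nat.
Hypothesis p_prime : prime p.

Let p_pow_neq0 (k : nat) : ((p ^ k)%:R : rat) != 0.
Proof. by rewrite pnatr_eq0 expn_eq0 negb_and -lt0n prime_gt0. Qed.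

(* z lies in Z[1/p][q]: some power of p clears all its denominators.  This
   is the form of ZinvpPoly suited to ring operations. *)
Definition p_integral (z : {poly rat}) : Prop :=
  exists k : nat, forall i, ((p ^ k)%:R : rat) * z`_i \is a Num.int.

Lemma denq_dvd_of_int (c : rat) (d : nat) :
  (d%:R * c) \is a Num.int -> (`|denq c| %| d)%N.
Proof.
move=> dc_int.
have e : numq c * d%:Z = numq (d%:R * c) * denq c.
  apply: (@intr_inj rat); rewrite !rmorphM /= (numqK dc_int) numqE.
  by rewrite pmulrn mulrC mulrA.
have := congr1 absz e; rewrite !abszM /= => e2.
have : (`|denq c| %| `|numq c| * d)%N by rewrite e2 dvdn_mull.
by rewrite Gauss_dvdr // coprime_sym coprime_num_den.
Qed.

(* p-integrality is the coefficientwise condition ZinvpPoly of the statement;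
   the exponent clearing all denominators is the sum of their valuations. *)
Lemma p_integralP (z : {poly rat}) : p_integral z <-> ZinvpPoly p z.
Proof.
split=> [[k hk] i | hz].
  have /denq_dvd_of_int den_dvd := hk i.
  by rewrite /Zinvp; apply: pnat_dvd den_dvd _; rewrite pnatX pnat_id.
exists (\sum_(i < size z) logn p `|denq z`_i|)%N => i.
have [lti | gei] := ltnP i (size z); last by rewrite nth_default // mulr0 rpred0.
set k := (\sum_(i < size z) _)%N; set e := logn p `|denq z`_i|.
have le_ek : (e <= k)%N by rewrite /k (bigD1 (Ordinal lti)) //= leq_addr.
have den_e : (`|denq z`_i| = p ^ e)%N by rewrite -p_part part_pnat_id //; apply: hz.
rewrite -(subnK le_ek) expnD natrM -mulrA.
have -> : ((p ^ e)%:R * z`_i : rat) = (numq z`_i)%:~R.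
  by rewrite numqE -den_e mulrC -[in RHS]absz_denq.
by rewrite rpredM ?rpred_int ?rpred_nat.
Qed.

Lemma p_integral_int (W : {poly int}) : p_integral (pZ W).
Proof. by exists 0%N => i; rewrite expn0 mul1r coef_map /= rpred_int. Qed.

Lemma p_integral0 : p_integral 0.
Proof. by exists 0%N => i; rewrite coef0 mulr0 rpred0. Qed.

Lemma p_integral1 : p_integral 1.
Proof. by rewrite -(rmorph1 pZ); apply: p_integral_int. Qed.

Lemma p_integralD a b : p_integral a -> p_integral b -> p_integral (a + b).
Proof.
move=> [k1 h1] [k2 h2]; exists (k1 + k2)%N => i.
rewrite coefD mulrDr expnD natrM {1}[X in X * a`_i]mulrC -!mulrA.
by rewrite rpredD // rpredM // rpred_nat.
Qed.

Lemma p_integralN a : p_integral a -> p_integral (- a).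
Proof. by move=> [k h]; exists k => i; rewrite coefN mulrN rpredN. Qed.

Lemma p_integralB a b : p_integral a -> p_integral b -> p_integral (a - b).
Proof. by move=> ha hb; apply: p_integralD => //; apply: p_integralN. Qed.

Lemma p_integralM a b : p_integral a -> p_integral b -> p_integral (a * b).
Proof.
move=> [k1 h1] [k2 h2]; exists (k1 + k2)%N => i.
rewrite coefM mulr_sumr; apply: rpred_sum => j _.
by rewrite expnD natrM mulrACA rpredM.
Qed.

Lemma p_integral_divp a e : p_integral a -> p_integral (((p ^ e)%:R : rat)^-1 *: a).
Proof.
move=> [k h]; exists (k + e)%N => i.
by rewrite coefZ mulrA expnD natrM mulrK // unitfE p_pow_neq0.
Qed.

Lemma p_integral_rep z : p_integral z ->
  exists k (W : {poly int}), z = ((p ^ k)%:R : rat)^-1 *: pZ W.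
Proof.
move=> [k hk]; exists k, (\poly_(i < size z) numq ((p ^ k)%:R * z`_i)).
apply/polyP => i; rewrite coefZ coef_map /= coef_poly.
case: ltnP => hi; first by rewrite (numqK (hk i)) mulKf ?p_pow_neq0.
by rewrite nth_default // mulr0.
Qed.

Lemma map_modp_monic (W D : {poly int}) : D \is monic ->
  pZ W %% pZ D = pZ (Pdiv.CommonRing.rmodp W D).
Proof.
move=> mD.
have pZ_inj : injective (intr : int -> rat) by exact: intr_inj.
rewrite {1}(Pdiv.RingMonic.rdivp_eq mD W) rmorphD rmorphM /=.
rewrite modpD modp_mull add0r modp_small // !size_map_inj_poly //.
exact: Pdiv.Ring.ltn_rmodpN0 (monic_neq0 mD).
Qed.

Lemma p_integral_modp z (D : {poly int}) : D \is monic ->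
  p_integral z -> p_integral (z %% pZ D).
Proof.
move=> mD /p_integral_rep [k [W ->]].
by rewrite modpZl map_modp_monic //; apply/p_integral_divp/p_integral_int.
Qed.

Definition comaximal (f g : {poly rat}) : Prop :=
  exists U V, [/\ p_integral U, p_integral V & U * f + V * g = 1].

Lemma comaximalC f g : comaximal f g -> comaximal g f.
Proof. by move=> [U [V [hU hV e]]]; exists V, U; rewrite addrC. Qed.

Lemma comaximal1 f : comaximal f 1.
Proof. by exists 0, 1; rewrite mul0r add0r mulr1; split; [exact: p_integral0|exact: p_integral1|]. Qed.

(* Comaximality with a product of p-integral factors: multiply the Bezout
   relations. *)
Lemma comaximalM f g h : p_integral g ->
  comaximal f g -> comaximal f h -> comaximal f (g * h).
Proof.
move=> hg [U1 [V1 [hU1 hV1 e1]]] [U2 [V2 [hU2 hV2 e2]]].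
exists (U1 + V1 * g * U2), (V1 * V2); split.
- by apply: p_integralD => //; apply: p_integralM => //; apply: p_integralM.
- exact: p_integralM.
rewrite mulrDl -addrA -(mulrA (V1 * g) U2 f) (mulrACA V1 V2 g h) -mulrDr e2.
by rewrite mulr1 e1.
Qed.

Lemma comaximal_coprimep f g : comaximal f g -> coprimep f g.
Proof.
by move=> [U [V [_ _ e]]]; apply/Bezout_coprimepP; exists (U, V); rewrite /= e eqpxx.
Qed.

Lemma Phi_factor_Xn_sub1 m K : (0 < K)%N -> (m %| K)%N ->
  exists Q : {poly int}, 'X^K - 1 = 'Phi_m * Q.
Proof.
move=> K_gt0 mK; exists (\prod_(d <- divisors K | d != m) 'Phi_d).
by rewrite -prod_Cyclotomic // (bigD1_seq m) ?divisors_uniq // -dvdn_divisors.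
Qed.

Lemma Phi_factor_geometric n K P : (0 < K)%N -> (0 < P)%N ->
  (n %| P * K)%N -> ~~ (n %| K)%N ->
  exists Q : {poly int}, \sum_(i < P) ('X^K) ^+ i = 'Phi_n * Q.
Proof.
move=> K_gt0 P_gt0 nPK nK.
have PK_gt0 : (0 < P * K)%N by rewrite muln_gt0 P_gt0.
set Q2 := \prod_(d <- divisors (P * K) | ~~ (d %| K)%N) 'Phi_d.
have split_PK : 'X^(P * K) - 1 = ('X^K - 1) * Q2 :> {poly int}.
  rewrite -prod_Cyclotomic // (bigID (fun d => (d %| K)%N)) /=; congr (_ * _).
  rewrite -big_filter -prod_Cyclotomic //; apply: perm_big.
  apply: uniq_perm; rewrite ?filter_uniq ?divisors_uniq // => d.
  rewrite mem_filter -!dvdn_divisors //.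
  apply/andP/idP => [[] //|dK]; split => //.
  exact: dvdn_trans dK (dvdn_mull _ _).
have -> : \sum_(i < P) ('X^K) ^+ i = Q2.
  have XK1_neq0 : 'X^K - 1 != 0 :> {poly int} by rewrite monic_neq0 ?monicXnsubC.
  by apply: (mulfI XK1_neq0); rewrite -split_PK -subrX1 -exprM mulnC.
exists (\prod_(d <- [seq d <- divisors (P * K) | ~~ (d %| K)%N] | d != n) 'Phi_d).
rewrite /Q2 -big_filter (bigD1_seq n) ?filter_uniq ?divisors_uniq //.
by rewrite mem_filter nK -dvdn_divisors.
Qed.

Lemma geometric_sub_count (R : pzRingType) (x : R) P :
  \sum_(i < P) x ^+ i - P%:R = (x - 1) * \sum_(i < P) \sum_(j < i) x ^+ j.
Proof.
have -> : P%:R = \sum_(i < P) (1 : R) by rewrite sumr_const card_ord.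
rewrite -sumrB mulr_sumr.
by apply: eq_bigr => i _; rewrite subrX1.
Qed.

(* The exponent K used to separate Phi_m from Phi_n when the p-adic valuation
   a of m is smaller than the valuation b of n: K = m v, where n = p^b v. *)
Lemma valuation_gap_exponent m n : (0 < m)%N -> (0 < n)%N ->
  (logn p m < logn p n)%N ->
  exists K, [/\ (0 < K)%N, (m %| K)%N,
                (n %| p ^ (logn p n - logn p m) * K)%N & ~~ (n %| K)%N].
Proof.
move=> m_gt0 n_gt0 lt_mn.
set a := logn p m; set b := logn p n.
set v := (n %/ p ^ b)%N; set u := (m %/ p ^ a)%N.
have def_n : n = (p ^ b * v)%N by rewrite mulnC divnK // pfactor_dvdnn.
have def_m : m = (p ^ a * u)%N by rewrite mulnC divnK // pfactor_dvdnn.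
have v_gt0 : (0 < v)%N by move: n_gt0; rewrite def_n muln_gt0 => /andP[].
have K_gt0 : (0 < m * v)%N by rewrite muln_gt0 m_gt0.
exists (m * v)%N; split => //; first exact: dvdn_mulr.
  have -> : (p ^ (b - a) * (m * v) = n * u)%N.
    rewrite def_m def_n !mulnA -expnD subnK ?(ltnW lt_mn) //.
    by rewrite mulnAC.
  exact: dvdn_mulr.
apply/negP => /(dvdn_leq_log p K_gt0).
have logv0 : logn p v = 0%N.
  by rewrite /v logn_div ?pfactor_dvdnn // pfactorK // subnn.
by rewrite lognM // -/a logv0 addn0 leqNgt lt_mn.
Qed.

(* Writing Y = q^K as above, P = p^(b - a) is
   sum_(i < P) Y^i (a multiple of Phi_n) minus a multiple of Y - 1 (itself a
   multiple of Phi_m). *)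
Lemma Phi_bezout_int m n : (0 < m)%N -> (0 < n)%N ->
  (logn p m < logn p n)%N ->
  exists A B : {poly int},
    ((p ^ (logn p n - logn p m))%:R : {poly int}) = A * 'Phi_n + B * 'Phi_m.
Proof.
move=> m_gt0 n_gt0 lt_mn.
set P := (p ^ (logn p n - logn p m))%N.
have P_gt0 : (0 < P)%N by rewrite expn_gt0 prime_gt0.
have [K [K_gt0 mK nPK nK]] := valuation_gap_exponent m_gt0 n_gt0 lt_mn.
have [Q1 eQ1] := Phi_factor_Xn_sub1 K_gt0 mK.
have [Q2 eQ2] := Phi_factor_geometric K_gt0 P_gt0 nPK nK.
have := geometric_sub_count ('X^K : {poly int}) P; rewrite eQ2 eQ1.
set g := \sum_(i < P) _ => e.
exists Q2, (- (Q1 * g)).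
by rewrite mulNr [Q1 * g * _]mulrC mulrA -e [Q2 * _]mulrC opprB addrC subrK.
Qed.

Lemma comaximal_Phi m n : (0 < m)%N -> (0 < n)%N ->
  logn p m != logn p n -> comaximal (Phi m) (Phi n).
Proof.
move=> m_gt0 n_gt0 ne_mn.
wlog lt_mn : m n m_gt0 n_gt0 ne_mn / (logn p m < logn p n)%N.
  move=> H; case: (ltngtP (logn p m) (logn p n)) => [||eq_mn]; first exact: H.
    by move=> lt_nm; apply/comaximalC/H; rewrite 1?eq_sym.
  by rewrite eq_mn eqxx in ne_mn.
have [A [B e]] := Phi_bezout_int m_gt0 n_gt0 lt_mn.
set e0 := (logn p n - logn p m)%N in e.
exists ((p ^ e0)%:R^-1 *: pZ B), ((p ^ e0)%:R^-1 *: pZ A).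
split; try by apply/p_integral_divp/p_integral_int.
rewrite -!scalerAl -scalerDr /Phi -!rmorphM -rmorphD /= addrC -e.
by rewrite rmorph_nat -scaler_nat scalerA mulVf ?p_pow_neq0 // scale1r.
Qed.

Lemma PhiProd_int s : PhiProd s = pZ (\prod_(n <- s) 'Phi_n).
Proof. by rewrite rmorph_prod. Qed.

Lemma PhiProd_int_monic s : (\prod_(n <- s) 'Phi_n) \is monic.
Proof. by apply: monic_prod => n _; apply: Cyclotomic_monic. Qed.

Lemma p_integral_PhiProd s : p_integral (PhiProd s).
Proof. by rewrite PhiProd_int; apply: p_integral_int. Qed.

Lemma p_integral_mod_PhiProd z s : p_integral z -> p_integral (z %% PhiProd s).
Proof. by rewrite PhiProd_int; apply/p_integral_modp/PhiProd_int_monic. Qed.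

Lemma comaximal_PhiProdr f s :
  (forall n, n \in s -> comaximal f (Phi n)) -> comaximal f (PhiProd s).
Proof.
elim: s => [|n s IHs] hs; first by rewrite /PhiProd big_nil; apply: comaximal1.
rewrite /PhiProd big_cons; apply: comaximalM; first exact: p_integral_int.
  by apply: hs; rewrite inE eqxx.
by apply: IHs => k ks; apply: hs; rewrite inE ks orbT.
Qed.

Lemma comaximal_PhiProd s t : Sseq Nat_pos s -> Sseq Nat_pos t ->
  (forall m n, m \in s -> n \in t -> logn p m != logn p n) ->
  comaximal (PhiProd s) (PhiProd t).
Proof.
move=> /allP s_pos /allP t_pos sep.
apply: comaximal_PhiProdr => n nt; apply/comaximalC/comaximal_PhiProdr => m ms.
by apply/comaximalC/comaximal_Phi; [exact: s_pos|exact: t_pos|exact: sep].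
Qed.

Lemma pjNpE j n : (0 < n)%N -> pjNp p j n = (logn p n == j).
Proof.
move=> n_gt0; rewrite /pjNp n_gt0 /=; apply/andP/eqP => [[pj_n cop] | <-].
  have def_n : n = (p ^ j * (n %/ p ^ j))%N by rewrite mulnC divnK.
  have pj_gt0 : (0 < p ^ j)%N by rewrite expn_gt0 prime_gt0.
  have w_gt0 : (0 < n %/ p ^ j)%N by rewrite divn_gt0 // dvdn_leq.
  by rewrite def_n lognM // pfactorK // logn_coprime ?addn0 // coprime_sym.
split; first exact: pfactor_dvdnn.
rewrite coprime_sym prime_coprime //; apply/negP => p_dvd.
have : (p ^ (logn p n).+1 %| n)%N.
  rewrite -[X in (_ %| X)%N](divnK (pfactor_dvdnn p n)) expnS.
  exact: dvdn_mul.
by rewrite pfactor_dvdn // ltnn.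
Qed.

Definition layer (j : nat) (s : seq nat) := [seq n <- s | logn p n == j].
Definition below (J : nat) (s : seq nat) := [seq n <- s | (logn p n < J)%N].

Lemma PhiProd_filter (P : pred nat) s :
  PhiProd s = PhiProd (filter P s) * PhiProd (filter (predC P) s).
Proof. by rewrite /PhiProd !big_filter (bigID P). Qed.

Lemma PhiProd_filter_dvd (P : pred nat) s : PhiProd (filter P s) %| PhiProd s.
Proof. by rewrite [X in _ %| X](PhiProd_filter P s) dvdp_mulr. Qed.

Lemma Sseq_filter (S P : pred nat) s : Sseq S s -> Sseq S (filter P s).
Proof. by move=> /allP Ss; apply/allP => n; rewrite mem_filter => /andP[_ /Ss]. Qed.

Lemma Sseq_layer s j : Sseq Nat_pos s -> Sseq (pjNp p j) (layer j s).
Proof.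
move=> /allP s_pos; apply/allP => n; rewrite mem_filter => /andP[/eqP e ns].
by rewrite /= pjNpE ?e //; apply: s_pos.
Qed.

Lemma PhiProd_below_succ J s :
  PhiProd (below J.+1 s) = PhiProd (below J s) * PhiProd (layer J s).
Proof.
rewrite (PhiProd_filter (fun n => logn p n < J)%N (below J.+1 s)) -!filter_predI.
congr (PhiProd _ * PhiProd _); apply: eq_filter => n /=.
  by rewrite ltnS; apply/andP/idP => [[] //|h]; split => //; apply: ltnW.
by rewrite ltnS -leqNgt eqn_leq andbC.
Qed.

Lemma PhiProd_layer_dvd_below j J s :
  (j < J)%N -> PhiProd (layer j s) %| PhiProd (below J s).
Proof.
move=> lt_jJ.
have -> : layer j s = filter (fun n => logn p n == j) (below J s).
  rewrite -filter_predI; apply: eq_filter => n /=.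
  by apply/idP/andP => [/eqP e|[] //]; split => //; rewrite e.
exact: PhiProd_filter_dvd.
Qed.

Lemma valuation_bound s : Sseq Nat_pos s ->
  exists J, forall n, n \in s -> (logn p n < J)%N.
Proof.
move=> s_pos; exists (\max_(n <- s) n).+1 => n ns.
rewrite ltnS; apply: leq_trans (ltnW (ltn_logl p _)) _; first exact: (allP s_pos).
exact: (leq_bigmax_seq (F := id) _ ns).
Qed.

Lemma below_all J s : (forall n, n \in s -> logn p n < J)%N -> below J s = s.
Proof. by move=> hs; apply/all_filterP/allP. Qed.

Lemma layer_nil j s : (forall n, n \in s -> logn p n != j) -> layer j s = [::].
Proof. by move=> hs; apply/eqP; rewrite -[_ == _]negbK -has_filter; apply/hasPn. Qed.

Lemma comaximal_below_layer J s : Sseq Nat_pos s ->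
  comaximal (PhiProd (below J s)) (PhiProd (layer J s)).
Proof.
move=> s_pos; apply: comaximal_PhiProd; try exact: Sseq_filter.
move=> m n; rewrite !mem_filter => /andP[lt_mJ _] /andP[/eqP -> _].
by rewrite neq_ltn lt_mJ.
Qed.

Lemma PhiProd_layer_dvd j s t : Sseq Nat_pos s -> Sseq Nat_pos t ->
  PhiProd s %| PhiProd t -> PhiProd (layer j s) %| PhiProd (layer j t).
Proof.
move=> s_pos t_pos st.
have := dvdp_trans (PhiProd_filter_dvd (fun n => logn p n == j) s) st.
rewrite (PhiProd_filter (fun n => logn p n == j) t) Gauss_dvdpl //.
apply/comaximal_coprimep/comaximal_PhiProd; try exact: Sseq_filter.
by move=> m n; rewrite !mem_filter => /andP[/eqP -> _] /andP[ne_nj _]; rewrite eq_sym.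
Qed.

(* By induction
   on J, the layers below J divide z1 - z2, since layer J is coprime to the
   layers below it. *)
Lemma crt_unique s z1 z2 : Sseq Nat_pos s ->
  z1 %% PhiProd s = z1 -> z2 %% PhiProd s = z2 ->
  (forall j, z1 %% PhiProd (layer j s) = z2 %% PhiProd (layer j s)) -> z1 = z2.
Proof.
move=> s_pos red1 red2 eq_layers.
have dvd_below J : PhiProd (below J s) %| z1 - z2.
  elim: J => [|J IH].
    have -> : below 0 s = [::] by rewrite /below (@eq_filter _ _ pred0) ?filter_pred0.
    by rewrite /PhiProd big_nil dvd1p.
  rewrite PhiProd_below_succ Gauss_dvdp ?IH /=; first exact/modp_eqP.
  exact/comaximal_coprimep/comaximal_below_layer.
have [J s_below] := valuation_bound s_pos.
have := dvd_below J; rewrite below_all // => /modp_eqP.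
by rewrite red1 red2.
Qed.

Section CRTExistence.

Variables (s : seq nat) (w : nat -> {poly rat}).
Hypotheses (s_pos : Sseq Nat_pos s) (w_int : forall j, p_integral (w j))
  (w_red : forall j, w j %% PhiProd (layer j s) = w j).

(* Solve the first J congruences, adding one layer at a time: the Bezout
   relation U F + V g = 1 between the layers below J and layer J gives the
   correction (w J - z) U F. *)
Lemma crt_below J : exists z, p_integral z /\
  forall j, (j < J)%N -> z %% PhiProd (layer j s) = w j.
Proof.
elim: J => [|J [z [z_int z_sol]]]; first by exists 0; split => //; exact: p_integral0.
have [U [V [U_int V_int bezout]]] := comaximal_below_layer J s_pos.
set F := PhiProd (below J s) in bezout *; set g := PhiProd (layer J s) in bezout *.
exists (z + (w J - z) * U * F); split.
  apply: p_integralD => //; apply: p_integralM; last exact: p_integral_PhiProd.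
  by apply: p_integralM => //; apply: p_integralB.
move=> j; rewrite ltnS leq_eqVlt => /orP[/eqP -> | lt_jJ].
  rewrite -[in RHS](w_red J) -/g; apply/modp_eqP.
  have -> : z + (w J - z) * U * F - w J = (z - w J) * (V * g).
    have -> : V * g = 1 - U * F by rewrite -bezout addrC addKr.
    by rewrite mulrBr mulr1 mulrA -[w J - z]opprB !mulNr addrAC.
  by rewrite dvdp_mull // dvdp_mull.
rewrite -(z_sol j lt_jJ); apply/modp_eqP.
by rewrite addrAC subrr add0r dvdp_mull // PhiProd_layer_dvd_below.
Qed.

(* Chinese remainder theorem, existence: once J exceeds every valuation, the
   remaining layers are empty and w j = w j mod 1 = 0 there. *)
Lemma crt_exists : exists z, [/\ p_integral z, z %% PhiProd s = z &
  forall j, z %% PhiProd (layer j s) = w j].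
Proof.
have [J s_below] := valuation_bound s_pos.
have [z [z_int z_sol]] := crt_below J.
exists (z %% PhiProd s); split; first exact: p_integral_mod_PhiProd.
  exact: modp_id.
move=> j; case: (ltnP j J) => [lt_jJ | le_Jj].
  by rewrite modp_dvd_modp ?z_sol //; apply: PhiProd_filter_dvd.
have layer_j_nil : layer j s = [::].
  by apply: layer_nil => n /s_below lt_nJ; rewrite neq_ltn (leq_trans lt_nJ le_Jj).
by have := w_red j; rewrite layer_j_nil /PhiProd big_nil !modp1.
Qed.

End CRTExistence.

Lemma pjNp_pos j s : Sseq (pjNp p j) s -> Sseq Nat_pos s.
Proof. by move=> /allP h; apply/allP => n /h /and3P[]. Qed.

Lemma inLim_layer x j s : inLim p Nat_pos x -> Sseq Nat_pos s ->
  x s %% PhiProd (layer j s) = x (layer j s).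
Proof.
move=> [_ x_compat] s_pos; symmetry; apply: x_compat => //.
  exact: Sseq_filter.
exact: PhiProd_filter_dvd.
Qed.

Lemma inLim_eq_on_layers x1 x2 : inLim p Nat_pos x1 -> inLim p Nat_pos x2 ->
  (forall j s, Sseq (pjNp p j) s -> x1 s = x2 s) ->
  forall s, Sseq Nat_pos s -> x1 s = x2 s.
Proof.
move=> x1_lim x2_lim agree s s_pos.
have reduced x : inLim p Nat_pos x -> x s %% PhiProd s = x s.
  by move=> [_ compat]; symmetry; apply: compat.
apply: (crt_unique s_pos); rewrite ?reduced // => j.
by rewrite !inLim_layer // (agree j) //; apply: Sseq_layer.
Qed.

Section Gluing.

Variable y : nat -> seq nat -> {poly rat}.
Hypothesis y_lim : forall j, inLim p (pjNp p j) (y j).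

Definition glue_spec (s : seq nat) (z : {poly rat}) : Prop :=
  [/\ p_integral z, z %% PhiProd s = z &
      forall j, z %% PhiProd (layer j s) = y j (layer j s)].

Lemma glue_exists s : exists z, Sseq Nat_pos s -> glue_spec s z.
Proof.
have [s_pos | _] := boolP (Sseq Nat_pos s); last by exists 0.
have y_int j : p_integral (y j (layer j s)).
  by apply/p_integralP; apply: (y_lim j).1; apply: Sseq_layer.
have y_red j : y j (layer j s) %% PhiProd (layer j s) = y j (layer j s).
  by symmetry; apply: (y_lim j).2; rewrite ?dvdpp //; apply: Sseq_layer.
by have [z z_spec] := crt_exists s_pos y_int y_red; exists z.
Qed.

Definition glue (s : seq nat) : {poly rat} :=
  proj1_sig (constructive_indefinite_description _ (glue_exists s)).

Lemma glueP s : Sseq Nat_pos s -> glue_spec s (glue s).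
Proof. exact: proj2_sig (constructive_indefinite_description _ (glue_exists s)). Qed.

Lemma glue_inLim : inLim p Nat_pos glue.
Proof.
split=> [s s_pos | s t s_pos t_pos st]; first by have [/p_integralP] := glueP s_pos.
have [_ red_s layers_s] := glueP s_pos; have [_ _ layers_t] := glueP t_pos.
apply: (crt_unique s_pos) => //; first exact: modp_id.
move=> j; rewrite layers_s modp_dvd_modp; last exact: PhiProd_filter_dvd.
have layer_st := PhiProd_layer_dvd j s_pos t_pos st.
rewrite -(modp_dvd_modp _ layer_st) layers_t.
by apply: (y_lim j).2 => //; apply: Sseq_layer.
Qed.

(* Restricting the glued family to p^j N_p gives back y j: such an s is its
   own layer j, and all its other layers are empty. *)
Lemma glue_extends j s : Sseq (pjNp p j) s -> glue s = y j s.
Proof.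
move=> s_j; have s_pos := pjNp_pos s_j.
have val_j n : n \in s -> logn p n == j.
  by move=> ns; rewrite -pjNpE; [exact: (allP s_j) | exact: (allP s_pos)].
have [_ red layers] := glueP s_pos.
apply: (crt_unique s_pos) => //.
  by symmetry; apply: (y_lim j).2; rewrite ?dvdpp.
move=> i; have [-> | ne_ij] := eqVneq i j.
  rewrite layers; have -> : layer j s = s by apply/all_filterP/allP.
  by apply: (y_lim j).2; rewrite ?dvdpp.
have -> : layer i s = [::].
  by apply: layer_nil => n /val_j /eqP ->; rewrite eq_sym.
by rewrite /PhiProd big_nil !modp1.
Qed.

End Gluing.
End CyclotomicCRT.


Theorem proposition8 (p : nat) (hp : prime p)
    (y : nat -> seq nat -> {poly rat})
    (hy : forall j : nat, inLim p (pjNp p j) (y j)) :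
  exists x : seq nat -> {poly rat},
    [/\ inLim p Nat_pos x,
        (forall (j : nat) (s : seq nat), Sseq (pjNp p j) s -> x s = y j s)
      & (forall x' : seq nat -> {poly rat}, inLim p Nat_pos x' ->
           (forall (j : nat) (s : seq nat), Sseq (pjNp p j) s -> x' s = y j s) ->
           forall s : seq nat, Sseq Nat_pos s -> x' s = x s)].
Proof.
exists (glue hp hy); split; [exact: glue_inLim | exact: glue_extends |].
move=> x' x'_lim x'_ext s s_pos.
apply: (inLim_eq_on_layers hp x'_lim (glue_inLim hp hy) _ s_pos) => j t t_j.
by rewrite (x'_ext j) // (glue_extends hp hy t_j).
Qed.
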